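(* Fix integers $P>1$ and $N\ge 1$, and set $L=N+P-1$. For $\mathbf{b}=[b_1,\dots,b_N]^T\in\{\pm1\}^N$ let $\mathbf{B}$ be the $L\times P$ matrix whose $j$th column ($1\le j\le P$) is $[\underbrace{0,\dots,0}_{j-1},b_1,\dots,b_N,\underbrace{0,\dots,0}_{P-j}]^T$. For $\mathbf{c}=(c_1,\dots,c_{P-1})\in\{\pm1\}^{P-1}$ let $\mathbf{G}(\mathbf{c})$ be the symmetric $P\times P$ Toeplitz matrix with all diagonal entries equal to $N$ and $(i,j)$ entry $c_{|i-j|}$ for $i\ne j$. For a prefix $\mathbf{b}_{(\ell)}=[b_1,\dots,b_\ell]\in\{\pm1\}^\ell$ ($1\le\ell\le N$), let $\mathcal{A}(\mathbf{b}_{(\ell)}\mid\mathbf{G}(\mathbf{c}))$ be the set of all $\mathbf{b}'\in\{\pm1\}^N$ whose first $\ell$ entries equal $b_1,\dots,b_\ell$ and whose associated matrix $\mathbf{B}'$ satisfies $\mathbf{B}'^T\mathbf{B}'=\mathbf{G}(\mathbf{c})$. For an integer $k\ge 0$, an integer vector $\mathbf{q}=(q_1,\dots,q_{P-1})\in\mathbb{Z}^{P-1}$ and $d_{2-P},\dots,d_0\in\{-1,0,1\}$, let $A_k(\mathbf{q}\mid d_{2-P},\dots,d_0)$ be the number of $(d_1,\dots,d_k)\in\{\pm1\}^k$ such that $q_j=\sum_{i=1}^k d_{i-j}d_i$ for all $1\le j\le P-1$ (for $k=0$ this equals $1$ if $\mathbf{q}=\mathbf{0}$ and $0$ otherwise).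 Let $\mathbf{m}_\ell=(m_\ell^{(1)},\dots,m_\ell^{(P-1)})$ with $m_\ell^{(j)}=(b_1b_{j+1}+b_2b_{j+2}+\cdots+b_{\ell-j}b_\ell)\cdot\mathbf{1}\{\ell>j\}$, and use the convention $b_i=0$ for $i\le 0$. Then for $\ell=1,2,\dots,N$, $$|\mathcal{A}(\mathbf{b}_{(\ell)}\mid\mathbf{G}(\mathbf{c}))|=A_{N-\ell}\big(\mathbf{c}-\mathbf{m}_\ell\,\big|\,b_{\ell-P+2},\dots,b_\ell\big).$$
   Context: $\mathbf{1}\{\cdot\}$ denotes the indicator function. $\mathbf{B}$ is the convolution matrix of the codeword for a channel of memory order $P-1$; the diagonal entries of $\mathbf{B}^T\mathbf{B}$ all equal $N$ and its $(i,j)$ entry is the aperiodic autocorrelation $\sum_t b_tb_{t+|i-j|}$. *)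

From mathcomp Require Import all_boot all_order all_algebra.
Set Implicit Arguments. Unset Strict Implicit. Unset Printing Implicit Defensive.
Import Order.TTheory GRing.Theory Num.Theory.
Local Open Scope ring_scope.

(* A sign vector in {+-1}^n is encoded as a finite function 'I_n -> bool,
   true |-> +1, false |-> -1. *)
Definition sgnb (x : bool) : int := if x then 1 else -1.

Definition sgnseq (n : nat) (x : {ffun 'I_n -> bool}) : seq int :=
  [seq sgnb (x i) | i <- enum 'I_n].

(* The L x P convolution matrix B, L = N + P - 1 (0-indexed):
   B i j = b_{i-j+1} (1-indexed b) if 0 <= i - j < N, else 0. *)
Definition convmx (N P : nat) (b : {ffun 'I_N -> bool}) : 'M[int]_(N + P - 1, P) :=
  \matrix_(i < N + P - 1, j < P)
    if (j <= i)%N && (i - j < N)%N then nth 0 (sgnseq b) (i - j) else 0.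

Definition Gmx (N P : nat) (c : {ffun 'I_(P - 1) -> bool}) : 'M[int]_P :=
  \matrix_(i < P, j < P)
    if i == j then (N%:Z) else nth 0 (sgnseq c) ((maxn i j - minn i j).-1).

Definition Aset (N P : nat) (l : nat) (b : {ffun 'I_N -> bool})
    (c : {ffun 'I_(P - 1) -> bool}) : {set {ffun 'I_N -> bool}} :=
  [set b' : {ffun 'I_N -> bool} |
     [forall i : 'I_N, (i < l)%N ==> (b' i == b i)] &&
     ((convmx P b')^T *m convmx P b' == Gmx N c)].

(* A_k(q | d_{2-P},...,d_0): dpre t = d_{t+2-P} for t = 0..P-2, q j = q_{j+1}.
   The extended sequence s has s_t = d_{t+2-P}, so d_n = s_{n+P-2}. *)
Definition Acount (P k : nat) (q : 'I_(P - 1) -> int) (dpre : 'I_(P - 1) -> int) : nat :=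
  #|[set d : {ffun 'I_k -> bool} |
     let s := [seq dpre t | t <- enum 'I_(P - 1)] ++ sgnseq d in
     [forall j : 'I_(P - 1),
        q j == \sum_(i < k) nth 0 s (i + P - 2 - j) * nth 0 s (i + P - 1)]]|.

(* m_l^{(j)} for j = j'+1 *)
Definition mvec (N P l : nat) (b : {ffun 'I_N -> bool}) (j : 'I_(P - 1)) : int :=
  if (j.+1 < l)%N then
    \sum_(i < l - j.+1) nth 0 (sgnseq b) i * nth 0 (sgnseq b) (i + j.+1)
  else 0.

(* b_n with convention b_n = 0 for n <= 0; bwin t = b_{l-P+2+t}, t = 0..P-2 *)
Definition bwin (N P l : nat) (b : {ffun 'I_N -> bool}) (t : 'I_(P - 1)) : int :=
  if (P - 2 < l + t)%N then nth 0 (sgnseq b) (l + t + 1 - P) else 0.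

(* The Gram matrix B'^T B' is the Toeplitz matrix of the aperiodic
   autocorrelations of b', so B'^T B' = G(c) says exactly that the
   autocorrelation of b' at every lag j in 1..P-1 equals c_j (the diagonal
   N is automatic for a +-1 sequence).  Write b' = b_(l) ++ d with
   d in {+-1}^(N-l).  Splitting the lag-j autocorrelation according to
   whether the later factor b'_v has v <= l or v > l, the first part is
   m_l^(j), determined by the prefix, and the second is the lag-j
   autocorrelation of d seen through the window b_(l-P+2), ..., b_l.  Hence
   b' |-> d is a bijection from A(b_(l) | G(c)) onto the sequences counted by
   A_(N-l)(c - m_l | b_(l-P+2), ..., b_l). *)
From mathcomp Require Import all_boot all_order all_algebra.
From mathcomp Require Import zify.
Set Implicit Arguments. Unset Strict Implicit. Unset Printing Implicit Defensive.
Import Order.TTheory GRing.Theory Num.Theory.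
Local Open Scope ring_scope.

Lemma nth_map_ord (T : Type) (x0 : T) n (f : 'I_n -> T) m (lt_mn : (m < n)%N) :
  nth x0 [seq f i | i <- enum 'I_n] m = f (Ordinal lt_mn).
Proof.
rewrite (nth_map (Ordinal lt_mn)) ?size_enum_ord //; congr f; apply: val_inj.
exact: nth_enum_ord.
Qed.

Lemma nth_map_ord_default (T : Type) (x0 : T) n (f : 'I_n -> T) m :
  (n <= m)%N -> nth x0 [seq f i | i <- enum 'I_n] m = x0.
Proof. by move=> le_nm; rewrite nth_default // size_map size_enum_ord. Qed.

Definition sgn_at n (x : {ffun 'I_n -> bool}) (m : nat) : int := nth 0 (sgnseq x) m.

Lemma sgn_at_default n (x : {ffun 'I_n -> bool}) m : (n <= m)%N -> sgn_at x m = 0.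
Proof. exact: nth_map_ord_default. Qed.

Lemma sgn_atE n (x : {ffun 'I_n -> bool}) m (lt_mn : (m < n)%N) :
  sgn_at x m = sgnb (x (Ordinal lt_mn)).
Proof. exact: nth_map_ord. Qed.

Lemma sgn_at_ord n (x : {ffun 'I_n -> bool}) (i : 'I_n) : sgn_at x i = sgnb (x i).
Proof. by rewrite (sgn_atE x (ltn_ord i)); congr (sgnb (x _)); apply: val_inj. Qed.

Lemma sgnbK (a : bool) : sgnb a * sgnb a = 1.
Proof. by case: a. Qed.

Definition autocorr n (x : {ffun 'I_n -> bool}) (k : nat) : int :=
  \sum_(u < n) sgn_at x u * sgn_at x (u + k).

Lemma autocorr0 n (x : {ffun 'I_n -> bool}) : autocorr x 0 = n%:Z.
Proof.
rewrite /autocorr; under eq_bigr => u _ do rewrite addn0 sgn_at_ord sgnbK.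
by rewrite sumr_const card_ord natz.
Qed.

Definition lag_prod n (x : {ffun 'I_n -> bool}) (k v : nat) : int :=
  if (k <= v)%N then sgn_at x (v - k) * sgn_at x v else 0.

Lemma lag_prod_default n (x : {ffun 'I_n -> bool}) k v : (n <= v)%N -> lag_prod x k v = 0.
Proof. by move=> le_nv; rewrite /lag_prod [sgn_at x v]sgn_at_default ?mulr0 ?if_same. Qed.

Lemma autocorr_lagE n (x : {ffun 'I_n -> bool}) k :
  autocorr x k = \sum_(0 <= v < n) lag_prod x k v.
Proof.
transitivity (\sum_(0 <= v < k + n) lag_prod x k v); last first.
  rewrite (big_cat_nat _ (n := n)) ?leq_addl //= [X in _ + X]big_nat_cond.
  rewrite [X in _ + X]big1 ?addr0 // => v /andP[/andP[le_nv _] _].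
  exact: lag_prod_default.
rewrite (big_cat_nat _ (n := k)) ?leq_addr //= big_nat_cond big1 ?add0r; last first.
  by move=> v /andP[/andP[_ lt_vk] _]; rewrite /lag_prod leqNgt lt_vk.
rewrite -[X in \sum_(X <= _ < _) _](add0n k) big_addn addKn big_mkord.
by apply: eq_bigr => i _; rewrite /lag_prod leq_addl addnK addnC.
Qed.

Lemma convmxE N P (x : {ffun 'I_N -> bool}) i j :
  convmx P x i j = if (j <= i)%N then sgn_at x (i - j) else 0.
Proof.
rewrite mxE; case: (j <= i)%N => //=; case: ltnP => // le_N.
by rewrite [RHS]sgn_at_default.
Qed.

Lemma gram_convmxE N P (x : {ffun 'I_N -> bool}) (j j' : 'I_P) : (j <= j')%N ->
  ((convmx P x)^T *m convmx P x) j j' = autocorr x (j' - j).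
Proof.
move=> le_jj'; have lt_j'P := ltn_ord j'; rewrite mxE.
under eq_bigr => i _ do rewrite mxE !convmxE.
rewrite -(big_mkord xpredT (fun i => (if (j <= i)%N then sgn_at x (i - j) else 0) *
   (if (j' <= i)%N then sgn_at x (i - j') else 0))).
rewrite (big_cat_nat _ (n := j')) //=; last by lia.
rewrite big_nat_cond big1 ?add0r; last first.
  by move=> i /andP[/andP[_ lt_ij'] _]; rewrite [(j' <= i)%N]leqNgt lt_ij' mulr0.
rewrite (eq_big_nat _ _ (F2 := fun i => sgn_at x (i - j) * sgn_at x (i - j'))); last first.
  by move=> i /andP[le_j'i _]; rewrite le_j'i (leq_trans le_jj' le_j'i).
rewrite -{1}(add0n j') big_addn.
rewrite (big_cat_nat _ (n := N)) //=; last by lia.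
rewrite [X in _ + X]big_nat_cond [X in _ + X]big1 ?addr0; last first.
  by move=> i /andP[/andP[le_Ni _] _]; rewrite addnK [sgn_at x i]sgn_at_default ?mulr0.
by rewrite big_mkord; apply: eq_bigr => i _; rewrite addnK mulrC addnBA.
Qed.

Lemma GmxE (N P : nat) (c : {ffun 'I_(P - 1) -> bool}) (j j' : 'I_P) (k : 'I_(P - 1)) :
  (j' = j + k.+1 :> nat)%N -> Gmx N c j j' = sgnb (c k).
Proof.
move=> def_j'; rewrite mxE ifN; last by rewrite -val_eqE /= def_j'; lia.
by rewrite (_ : _.-1 = k); [exact: sgn_at_ord | lia].
Qed.

Lemma gram_convmx_eq_Gmx N P (x : {ffun 'I_N -> bool}) (c : {ffun 'I_(P - 1) -> bool}) :
  ((convmx P x)^T *m convmx P x == Gmx N c) =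
  [forall k : 'I_(P - 1), autocorr x k.+1 == sgnb (c k)].
Proof.
have lt_P k : (k < P - 1)%N -> (0 < P)%N /\ (k.+1 < P)%N by lia.
apply/eqP/forallP => [gramE k | autocorrE].
  have [lt0P lt_kP] := lt_P k (ltn_ord k).
  have := congr1 (fun M : 'M[int]_P => M (Ordinal lt0P) (Ordinal lt_kP)) gramE.
  by rewrite /= gram_convmxE //= subn0 (@GmxE N P c _ _ k) // => ->.
apply/matrixP => j j'.
wlog le_jj' : j j' / (j <= j')%N.
  move=> sym_case; case: (leqP j j') => [|/ltnW]; first exact: sym_case.
  have gram_sym : ((convmx P x)^T *m convmx P x)^T = (convmx P x)^T *m convmx P x.
    by rewrite trmx_mul trmxK.
  move/sym_case => gramE; rewrite -gram_sym mxE gramE.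
  by rewrite !mxE eq_sym maxnC minnC.
rewrite gram_convmxE //; case: (eqVneq j j') => [<-|ne_jj'].
  by rewrite subnn autocorr0 mxE eqxx.
have lt_jj' : (j < j')%N by rewrite ltn_neqAle ne_jj'.
have lt_k : (j' - j - 1 < P - 1)%N by have := ltn_ord j'; lia.
rewrite (@GmxE N P c _ _ (Ordinal lt_k)) /=; last by lia.
by rewrite -(eqP (autocorrE (Ordinal lt_k))) /=; congr autocorr; lia.
Qed.

Section Splice.

Variables (N l : nat) (b : {ffun 'I_N -> bool}).

Definition splice (d : {ffun 'I_(N - l) -> bool}) : {ffun 'I_N -> bool} :=
  [ffun i : 'I_N => if (i < l)%N then b i else nth false (fgraph d) (i - l)].

Definition drop_prefix (x : {ffun 'I_N -> bool}) : {ffun 'I_(N - l) -> bool} :=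
  [ffun k : 'I_(N - l) => nth false (fgraph x) (k + l)].

Lemma splice_prefix d (i : 'I_N) : (i < l)%N -> splice d i = b i.
Proof. by move=> lt_il; rewrite ffunE lt_il. Qed.

Lemma sgn_at_splice d n :
  sgn_at (splice d) n = if (n < l)%N then sgn_at b n else sgn_at d (n - l).
Proof.
case: (ltnP n N) => [lt_nN | le_Nn]; last first.
  by rewrite !sgn_at_default ?if_same //; lia.
rewrite (sgn_atE _ lt_nN) ffunE /=; case: ifP => lt_nl; first by rewrite (sgn_atE b lt_nN).
have lt_k : (n - l < N - l)%N by move/negbT: lt_nl; lia.
by rewrite (sgn_atE d lt_k) (nth_fgraph_ord _ (Ordinal lt_k)).
Qed.

Lemma drop_prefixK : cancel splice drop_prefix.
Proof.
move=> d; apply/ffunP => k; have lt_kN : (k + l < N)%N by have := ltn_ord k; lia.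
rewrite ffunE (nth_fgraph_ord _ (Ordinal lt_kN)) ffunE /= ifF; last by lia.
have lt_k : (k + l - l < N - l)%N by rewrite addnK.
by rewrite (nth_fgraph_ord _ (Ordinal lt_k)); congr (d _); apply: val_inj => /=; lia.
Qed.

Lemma splice_drop_prefix (x : {ffun 'I_N -> bool}) :
  (forall i : 'I_N, (i < l)%N -> x i = b i) -> splice (drop_prefix x) = x.
Proof.
move=> x_prefix; apply/ffunP => i; rewrite ffunE; case: ifP => lt_il; first by rewrite x_prefix.
have lt_k : (i - l < N - l)%N by have := ltn_ord i; move/negbT: lt_il; lia.
have lt_iN : (i - l + l < N)%N by have := ltn_ord i; move/negbT: lt_il; lia.
rewrite (nth_fgraph_ord _ (Ordinal lt_k)) ffunE (nth_fgraph_ord _ (Ordinal lt_iN)).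
by congr (x _); apply: val_inj => /=; move/negbT: lt_il; lia.
Qed.

Variable P : nat.
Hypothesis lt0P : (0 < P)%N.

(* The sequence (d_{2-P}, ..., d_{N-l}) of the definition of A_(N-l), with
   the window b_(l-P+2), ..., b_l in front of d; see [nth_window_seq]. *)
Definition window_seq (d : {ffun 'I_(N - l) -> bool}) : seq int :=
  [seq @bwin N P l b t | t <- enum 'I_(P - 1)] ++ sgnseq d.

Lemma nth_window_seq d m :
  nth 0 (window_seq d) m =
  if (P - 1 <= m + l)%N then sgn_at (splice d) (m + l + 1 - P) else 0.
Proof.
rewrite nth_cat size_map size_enum_ord sgn_at_splice; case: ltnP => [lt_mP | le_Pm].
  rewrite (nth_map_ord _ _ lt_mP) /bwin /= addnC.
  have -> : (P - 2 < m + l)%N = (P - 1 <= m + l)%N by apply/idP/idP; lia.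
  by case: ifP => // le_Pml; rewrite ifT //; lia.
rewrite ifT; last by lia.
by rewrite ifF; [congr (sgn_at d _) | ]; lia.
Qed.

Variable k : 'I_(P - 1).

Lemma lag_sum_prefix d : \sum_(0 <= v < l) lag_prod (splice d) k.+1 v = @mvec N P l b k.
Proof.
rewrite /mvec; case: ltnP => [lt_kl | le_lk]; last first.
  by rewrite big_nat_cond big1 // => v /andP[/andP[_ lt_vl] _]; rewrite /lag_prod ifF //; lia.
rewrite (big_cat_nat _ (n := k.+1)) //=; last exact: ltnW.
rewrite big_nat_cond big1 ?add0r; last first.
  by move=> v /andP[/andP[_ lt_vk] _]; rewrite /lag_prod leqNgt lt_vk.
rewrite -[X in \sum_(X <= _ < _) _](add0n k.+1) big_addn big_mkord.
apply: eq_bigr => i _; have lt_i := ltn_ord i.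
by rewrite /lag_prod leq_addl addnK addnC !sgn_at_splice !ifT //; lia.
Qed.

Lemma lag_sum_suffix d :
  \sum_(l <= v < N) lag_prod (splice d) k.+1 v =
  \sum_(i < N - l) nth 0 (window_seq d) (i + P - 2 - k) * nth 0 (window_seq d) (i + P - 1).
Proof.
have lt_kP := ltn_ord k.
rewrite -[X in \sum_(X <= _ < _) _](add0n l) big_addn big_mkord.
apply: eq_bigr => i _; rewrite !nth_window_seq /lag_prod [in X in _ = _ * X]ifT; last by lia.
have -> : (P - 1 <= i + P - 2 - k + l)%N = (k < i + l)%N by apply/idP/idP; lia.
case: ifP => [lt_ki | _]; last by rewrite mul0r.
by apply: f_equal2; apply: congr1; lia.
Qed.

Lemma autocorr_splice d : (l <= N)%N ->
  autocorr (splice d) k.+1 =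
  @mvec N P l b k +
  \sum_(i < N - l) nth 0 (window_seq d) (i + P - 2 - k) * nth 0 (window_seq d) (i + P - 1).
Proof.
by move=> le_lN; rewrite autocorr_lagE (big_cat_nat _ (n := l)) //= lag_sum_prefix lag_sum_suffix.
Qed.

End Splice.

Lemma Aset_splice N P l (b : {ffun 'I_N -> bool}) (c : {ffun 'I_(P - 1) -> bool}) :
  @Aset N P l b c =
  splice b @: [set d : {ffun 'I_(N - l) -> bool} |
                [forall k : 'I_(P - 1), autocorr (splice b d) k.+1 == sgnb (c k)]].
Proof.
apply/setP => x; rewrite inE gram_convmx_eq_Gmx.
apply/andP/imsetP => [[/forallP x_prefix x_autocorr] | [d d_autocorr ->]].
  have x_prefixE (i : 'I_N) : (i < l)%N -> x i = b i.
    by move=> lt_il; apply/eqP/(implyP (x_prefix i)).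
  by exists (drop_prefix l x); rewrite ?inE splice_drop_prefix.
split; last by move: d_autocorr; rewrite inE.
by apply/forallP => i; apply/implyP => lt_il; rewrite splice_prefix.
Qed.

Theorem lemma4 (P N : nat) (hP : (1 < P)%N) (hN : (1 <= N)%N)
    (b : {ffun 'I_N -> bool}) (c : {ffun 'I_(P - 1) -> bool})
    (l : nat) (hl1 : (1 <= l)%N) (hlN : (l <= N)%N) :
  #|@Aset N P l b c| =
  @Acount P (N - l) (fun j => sgnb (c j) - @mvec N P l b j) (@bwin N P l b).
Proof.
rewrite Aset_splice card_imset; last exact: can_inj (drop_prefixK b).
apply: eq_card => d; rewrite !inE; apply: eq_forallb => k.
by rewrite autocorr_splice ?(ltnW hP) // eq_sym addrC subr_eq.
Qed.
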